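(* Let $S$ be the output of Algorithm 1 and let $\epsilon>0$. For each $c\in C$, \[ \Pr\left[f_c(S)\le\left(1-\frac1e-\epsilon\right)\mathrm{OPT}\right]\;\le\;\exp\left(-\frac{\epsilon^2\,\mathrm{OPT}}{4M_c}\right), \] where $M_c=\max_{v\in V} f_c(v\mid\emptyset)$ (assumed positive).
   Context: Setup: $V$ is a finite nonempty ground set, $C$ is a finite nonempty set of ''colors'', $k=|C|$. For each $c\in C$, $f_c\colon 2^V\to\mathbb{R}_{\ge 0}$ is monotone and submodular. $B$ is a positive integer (the budget). $f(T\mid S)=f(S\cup T)-f(S)$ and $f(v\mid S)=f(\{v\}\mid S)$. $\mathrm{OPT}=\max_{S\subseteq V,\,|S|\le B}\min_{c\in C} f_c(S)$. $\Delta_V$ is the probability simplex over $V$. Algorithm 1 (assumes $\mathrm{OPT}$ known): set $S^{(0)}=\emptyset$; for $i=1,\dots,B$: choose any $x^{(i)}\in\Delta_V$ (the choice may depend arbitrarily on the history) such that $\sum_{v\in V}x^{(i)}_v f_c(v\mid S^{(i-1)})\ge \frac1B(\mathrm{OPT}-f_c(S^{(i-1)}))$ for all $c\in C$ (such $x^{(i)}$ always exists); sample $v^{(i)}\sim x^{(i)}$ using fresh randomness; set $S^{(i)}=S^{(i-1)}\cup\{v^{(i)}\}$. Output $S^{(B)}$. *)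

From HB Require Import structures.
From mathcomp Require Import all_boot all_order all_algebra.
From mathcomp Require Import all_classical all_reals.
From mathcomp Require Import all_analysis.
Set Implicit Arguments. Unset Strict Implicit. Unset Printing Implicit Defensive.
Import Order.TTheory GRing.Theory Num.Theory.
Local Open Scope ring_scope.

Section Defs.
Variables (R : realType) (V C : finType).

Definition marg (g : {set V} -> R) (v : V) (S : {set V}) : R := g (v |: S) - g S.

Definition monotone_set (g : {set V} -> R) : Prop :=
  forall S T : {set V}, S \subset T -> g S <= g T.

Definition submodular (g : {set V} -> R) : Prop :=
  forall S T : {set V}, g (S :|: T) + g (S :&: T) <= g S + g T.

Definition nonneg_set (g : {set V} -> R) : Prop := forall S, 0 <= g S.

(* min_{c in C} f_c(S); c0 : C only witnesses nonemptiness of C (the value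
   does not depend on it). *)
Definition minf (f : C -> {set V} -> R) (c0 : C) (S : {set V}) : R :=
  \big[Num.min/f c0 S]_(c : C) f c S.

(* OPT = max_{|S| <= B} min_c f_c(S)  (the empty set is feasible). *)
Definition OPT (f : C -> {set V} -> R) (c0 : C) (B : nat) : R :=
  \big[Num.max/minf f c0 finset.set0]_(S : {set V} | (#|S| <= B)%N) minf f c0 S.

(* (0 as the neutral element is harmless: g monotone gives marginals >= 0) *)
Definition Mc (g : {set V} -> R) : R :=
  \big[Num.max/0]_(v : V) marg g v finset.set0.

(* A run of Algorithm 1 is described by its (adaptive) choice rule:
   x h is the distribution x^(i) chosen after history h = [v^(1);...;v^(i-1)],
   so S^(i-1) = [set:: h]. *)
Definition in_simplex (x : V -> R) : Prop :=
  (forall v, 0 <= x v) /\ \sum_(v : V) x v = 1.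

Definition valid_rule (f : C -> {set V} -> R) (c0 : C) (B : nat)
    (x : seq V -> V -> R) : Prop :=
  forall h : seq V, (size h < B)%N ->
    in_simplex (x h) /\
    forall c : C,
      (OPT f c0 B - f c [set:: h]) / B%:R
        <= \sum_(v : V) x h v * marg (f c) v [set:: h].

Definition run_prob (B : nat) (x : seq V -> V -> R) (t : B.-tuple V) : R :=
  \prod_(i < B) x (take i t) (tnth t i).

Definition Pr_out (B : nat) (x : seq V -> V -> R) (E : {set V} -> bool) : R :=
  \sum_(t : B.-tuple V | E [set:: t]) run_prob x t.
End Defs.

From HB Require Import structures.
From mathcomp Require Import all_boot all_order all_algebra.
From mathcomp Require Import all_classical all_reals.
From mathcomp Require Import all_analysis.
From mathcomp Require Import ring lra.
Set Implicit Arguments. Unset Strict Implicit. Unset Printing Implicit Defensive.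
Import Order.TTheory GRing.Theory Num.Theory.
Local Open Scope ring_scope.

(* A Chernoff bound through a multiplicative supermartingale. By monotonicity
   and submodularity every marginal gain g of f_c lies in [0, M_c], so for
   0 <= a <= l we have exp(-a g / M_c) <= 1 - a g / ((1 + l) M_c); together
   with the guarantee E[g] >= (OPT - f_c(S)) / B of the rule this shows, for
   the schedule l_k = l (1 - 1/((1 + l) B))^k, that
   exp(-(l_k f_c(S) + (l - l_k) OPT) / M_c) bounds the conditional expectation
   of exp(-l f_c(S^(B)) / M_c) when k steps remain.  Markov's inequality then
   gives Pr[f_c(S^(B)) <= t] <= exp((l t - (l - l_B) OPT) / M_c), where
   l_B <= l e^(l - 1), and l = eps/2 yields the bound. *)

Lemma expRN_mul_le (R : realType) (a l u : R) :
  0 <= a <= l -> 0 <= u <= 1 -> expR (- (a * u)) <= 1 - a / (1 + l) * u.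
Proof.
move=> /andP[a0 al] /andP[u0 u1].
have au0 : 0 <= a * u by exact: mulr_ge0.
have aul : a * u <= l by apply: le_trans al; rewrite -[leRHS]mulr1 ler_wpM2l.
apply: (@le_trans _ _ ((1 + a * u)^-1)).
  by rewrite expRN lef_pV2 ?posrE ?expR_gt0 ?expR_ge1Dx //; lra.
rewrite -[leLHS]mul1r ler_pdivrMr; last lra.
have -> : (1 - a / (1 + l) * u) * (1 + a * u) = 1 + a * u * (l - a * u) / (1 + l).
  by field; lra.
have : 0 <= a * u * (l - a * u) / (1 + l) by apply: divr_ge0; nra.
lra.
Qed.

Lemma expR_sub1_sub_expRN1_le (R : realType) (l : R) : 0 <= l <= 1 ->
  expR (l - 1) - expR (-1) <= l.
Proof.
move=> /andP[l0 l1].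
have -> : expR (-1) = expR (l - 1) * expR (- l) by rewrite -expRD addrAC subrr add0r.
set E := expR (l - 1).
have E1 : E <= 1 by rewrite -expR0 ler_expR; lra.
have : 0 <= E * (expR (- l) - (1 - l)).
  by rewrite mulr_ge0 ?expR_ge0 // subr_ge0 -[1 - l]/(1 + - l) expR_ge1Dx.
have : 0 <= (1 - E) * l by rewrite mulr_ge0 // subr_ge0.
lra.
Qed.

Section Rate.
Variables (R : realType) (l : R) (B : nat).
Hypotheses (l_ge0 : 0 <= l) (B_gt0 : (0 < B)%N).

Definition rate (k : nat) : R := l * (1 - ((1 + l) * B%:R)^-1) ^+ k.

Let step_ge0 : 0 <= 1 - ((1 + l) * B%:R)^-1.
Proof.
have B1 : 1 <= (B%:R : R) by rewrite ler1n.
have lB : 0 <= l * B%:R by rewrite mulr_ge0.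
by rewrite subr_ge0 invf_le1 mulrDl mul1r; lra.
Qed.

Lemma rateS k : rate k.+1 = rate k - rate k / ((1 + l) * B%:R).
Proof. by rewrite /rate exprSr; ring. Qed.

Lemma rate_ge0 k : 0 <= rate k.
Proof. by rewrite mulr_ge0 ?exprn_ge0. Qed.

Lemma rate_le k : rate k <= l.
Proof.
rewrite -[leRHS]mulr1 ler_wpM2l // exprn_ile1 // gerBl.
by rewrite invr_ge0 mulr_ge0 // addr_ge0.
Qed.

Lemma rate_B_le : l <= 1 -> rate B <= l * expR (l - 1).
Proof.
move=> l1; rewrite ler_wpM2l //.
have Bp : 0 < (B%:R : R) by rewrite ltr0n.
apply: (@le_trans _ _ (expR (- ((1 + l) * B%:R)^-1) ^+ B)).
  by rewrite lerXn2r ?nnegrE ?expR_ge0 // -[leLHS]/(1 + - _) expR_ge1Dx.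
rewrite -expRM_natr ler_expR mulNr invfM -mulrA mulVf ?gt_eqF // mulr1.
rewrite lerNl opprB -[(1 + l)^-1]mul1r ler_pdivlMr; last first.
  by apply: lt_le_trans ltr01 _; rewrite lerDl.
by have := sqr_ge0 l; rewrite expr2; lra.
Qed.

End Rate.

Lemma sum_tuple0 (R : nmodType) (V : finType) (F : 0.-tuple V -> R) :
  \sum_(t : 0.-tuple V) F t = F [tuple].
Proof. by rewrite (big_pred1 [tuple]) // => t /=; apply/esym/eqP; exact: tuple0. Qed.

Lemma sum_tupleS (R : nmodType) (V : finType) n (F : n.+1.-tuple V -> R) :
  \sum_(t : n.+1.-tuple V) F t = \sum_(v : V) \sum_(t : n.-tuple V) F [tuple of v :: t].
Proof.
rewrite pair_big /= (reindex (fun p : V * n.-tuple V => [tuple of p.1 :: p.2])) //=.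
exists (fun t : n.+1.-tuple V => (thead t, [tuple of behead t])).
  by move=> [v t] _ /=; rewrite theadE; congr pair; apply: val_inj.
by move=> t _ /=; rewrite [RHS]tuple_eta.
Qed.

Lemma set_seq_rcons (V : finType) (h : seq V) v : [set:: rcons h v] = v |: [set:: h].
Proof. by apply/setP => y; rewrite !inE mem_rcons inE. Qed.

Section Expectation.
Variables (R : realType) (V : finType) (x : seq V -> V -> R).

Definition run_prob_from (h : seq V) {n} (t : n.-tuple V) : R :=
  \prod_(i < n) x (h ++ take i t) (tnth t i).

Definition Ex_from (h : seq V) n (g : seq V -> R) : R :=
  \sum_(t : n.-tuple V) run_prob_from h t * g (h ++ t).

Lemma Ex_from0 h g : Ex_from h 0 g = g h.
Proof. by rewrite /Ex_from sum_tuple0 /run_prob_from big_ord0 mul1r cats0. Qed.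

Lemma Ex_fromS h n g :
  Ex_from h n.+1 g = \sum_(v : V) x h v * Ex_from (rcons h v) n g.
Proof.
rewrite /Ex_from sum_tupleS; apply: eq_bigr => v _; rewrite big_distrr.
apply: eq_bigr => t _ /=.
rewrite /run_prob_from big_ord_recl /= cats0 tnth0 -mulrA cat_rcons.
congr (_ * (_ * _)); apply: eq_bigr => i _.
by rewrite tnthS /= add0n cat_rcons.
Qed.

Lemma Ex_fromZ h n c g : Ex_from h n (fun s => c * g s) = c * Ex_from h n g.
Proof. by rewrite /Ex_from big_distrr; apply: eq_bigr => t _; rewrite mulrCA. Qed.

Lemma Pr_out_le_Ex_from B (E : {set V} -> bool) (g : seq V -> R) :
    (forall h, (size h < B)%N -> forall v, 0 <= x h v) ->
    (forall s, 0 <= g s) -> (forall s, E [set:: s] -> 1 <= g s) ->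
  Pr_out B x E <= Ex_from [::] B g.
Proof.
move=> x_ge0 g_ge0 gE; rewrite /Pr_out /Ex_from big_mkcond /=.
apply: ler_sum => t _.
have p_ge0 : 0 <= run_prob x t.
  by apply: prodr_ge0 => i _; apply: x_ge0; rewrite size_takel // size_tuple ltnW.
case: ifP => Et; last exact: mulr_ge0.
by rewrite -[leLHS]mulr1 ler_wpM2l // gE.
Qed.

End Expectation.

Section Marginals.
Variables (R : realType) (V : finType) (F : {set V} -> R).

Lemma marg_ge0 v S : monotone_set F -> 0 <= marg F v S.
Proof. by move=> Fmono; rewrite subr_ge0 Fmono // subsetU1. Qed.

Lemma marg_le_marg_set0 v S :
  monotone_set F -> submodular F -> marg F v S <= marg F v finset.set0.
Proof.
move=> Fmono Fsub; have [vS | vNS] := boolP (v \in S).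
  have -> : marg F v S = 0.
    rewrite /marg (finset.setUidPr (_ : [set v] \subset S)) ?subrr //.
    by rewrite finset.sub1set.
  exact: marg_ge0.
have := Fsub [set v] S.
rewrite /marg finset.setU0 (_ : [set v] :&: S = finset.set0); first lra.
by apply/finset.setP => y; rewrite !inE; case: eqP => // ->; rewrite (negbTE vNS).
Qed.

Lemma marg_le_Mc v S : monotone_set F -> submodular F -> marg F v S <= Mc F.
Proof.
move=> Fmono Fsub; apply: le_trans (marg_le_marg_set0 v S Fmono Fsub) _.
exact: (le_bigmax _ (fun w => marg F w finset.set0) v).
Qed.

End Marginals.

Lemma OPT_ge0 (R : realType) (V C : finType) (f : C -> {set V} -> R) c B :
  (forall c', nonneg_set (f c')) -> 0 <= OPT f c B.
Proof.
move=> f_ge0; apply: le_trans (bigmax_ge_id _ _ _ _).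
by apply/bigmin_geP; split=> [|c' _]; apply: f_ge0.
Qed.

Section Supermartingale.
Variables (R : realType) (V : finType) (x : seq V -> V -> R) (F : {set V} -> R).
Variables (M O : R) (B : nat).
Hypothesis rule_simplex : forall h, (size h < B)%N -> in_simplex (x h).
Hypothesis rule_progress : forall h, (size h < B)%N ->
  (O - F [set:: h]) / B%:R <= \sum_(v : V) x h v * marg F v [set:: h].
Hypothesis marg_bounded : forall v S, 0 <= marg F v S <= M.
Hypotheses (M_gt0 : 0 < M) (B_gt0 : (0 < B)%N).
Hypotheses (F_ge0 : nonneg_set F) (O_ge0 : 0 <= O).

Lemma Ex_step_le h (a l : R) : (size h < B)%N -> 0 <= a <= l ->
  \sum_(v : V) x h v * expR (- (a * (marg F v [set:: h] / M)))
    <= expR (- (a / (1 + l) / M * ((O - F [set:: h]) / B%:R))).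
Proof.
move=> hB al; have [x_ge0 x_sum1] := rule_simplex hB.
have l_ge0 : 0 <= l by case/andP: al => a0; apply: le_trans.
set k := a / (1 + l) / M.
have k_ge0 : 0 <= k by rewrite !divr_ge0 ?(ltW M_gt0) ?addr_ge0 //; case/andP: al.
apply: le_trans (expR_ge1Dx _).
apply: (@le_trans _ _ (1 - k * \sum_(v : V) x h v * marg F v [set:: h])).
  rewrite -x_sum1 mulr_sumr -sumrB; apply: ler_sum => v _.
  have /andP[m0 mM] := marg_bounded v [set:: h].
  have u01 : 0 <= marg F v [set:: h] / M <= 1.
    by rewrite divr_ge0 ?ler_pdivrMr ?mul1r ?(ltW M_gt0).
  apply: le_trans (ler_wpM2l (x_ge0 v) (expRN_mul_le al u01)) _.
  rewrite /k le_eqVlt; apply/orP; left; apply/eqP.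
  by field; rewrite !gt_eqF // ltr_wpDr.
by rewrite lerD2l lerN2 ler_wpM2l ?rule_progress.
Qed.

Lemma Ex_expR_le (l : R) n h : 0 <= l -> (size h + n)%N = B ->
  Ex_from x h n (fun s => expR (- (l * F [set:: s]) / M))
    <= expR (- (rate l B n * F [set:: h] + (l - rate l B n) * O) / M).
Proof.
move=> l_ge0; elim: n h => [|n IH] h hn.
  by rewrite Ex_from0 /rate expr0 mulr1 subrr mul0r addr0.
have hB : (size h < B)%N by rewrite -hn addnS ltnS leq_addr.
set a := rate l B n; set S := [set:: h].
have al : 0 <= a <= l by rewrite rate_ge0 ?rate_le.
rewrite Ex_fromS.
apply: (@le_trans _ _ (expR (- (a * F S + (l - a) * O) / M) *
    \sum_(v : V) x h v * expR (- (a * (marg F v S / M))))).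
  rewrite mulr_sumr; apply: ler_sum => v _; rewrite mulrCA.
  apply: ler_wpM2l; first by have [] := rule_simplex hB.
  apply: le_trans (IH (rcons h v) _) _; first by rewrite size_rcons addSnnS.
  rewrite -expRD le_eqVlt; apply/orP; left; apply/eqP; congr expR.
  by rewrite /marg set_seq_rcons -/a -/S; field; rewrite gt_eqF.
apply: le_trans (ler_wpM2l (expR_ge0 _) (Ex_step_le hB al)) _.
rewrite -expRD le_eqVlt; apply/orP; left; apply/eqP; congr expR.
rewrite rateS // -/a -/S; field.
by rewrite !gt_eqF ?ltr0n ?ltr_wpDr.
Qed.

Lemma Pr_out_le_expR (a l : R) : 0 <= l <= 1 ->
  Pr_out B x (fun S => F S <= a)
    <= expR ((l * a - (l - l * expR (l - 1)) * O) / M).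
Proof.
move=> /andP[l_ge0 l_le1].
pose g s := expR (l * a / M) * expR (- (l * F [set:: s]) / M).
apply: (@le_trans _ _ (Ex_from x [::] B g)).
  apply: Pr_out_le_Ex_from => [h hB | s | s Fs].
  - by have [] := rule_simplex hB.
  - by rewrite mulr_ge0 ?expR_ge0.
  - rewrite /g -expRD -expR0 ler_expR mulNr -mulrBl -mulrBr.
    by rewrite divr_ge0 ?mulr_ge0 ?subr_ge0 ?(ltW M_gt0).
rewrite Ex_fromZ.
have := Ex_expR_le (n:=B) (h:=[::]) l_ge0 (erefl B).
move/(ler_wpM2l (expR_ge0 (l * a / M)))/le_trans; apply.
rewrite -expRD ler_expR mulNr -mulrBl ler_pM2r ?invr_gt0 //.
have := mulr_ge0 (rate_ge0 l_ge0 B_gt0 B) (F_ge0 [set:: [::]]).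
have : (l - l * expR (l - 1)) * O <= (l - rate l B B) * O.
  by rewrite ler_wpM2r // lerD2l lerN2 rate_B_le.
lra.
Qed.

End Supermartingale.

Lemma chernoff_exponent_le (R : realType) (eps O M : R) :
  0 < eps <= 2 -> 0 <= O -> 0 < M ->
  (eps / 2 * ((1 - expR (-1) - eps) * O)
     - (eps / 2 - eps / 2 * expR (eps / 2 - 1)) * O) / M
    <= - (eps ^+ 2 * O) / (4 * M).
Proof.
move=> /andP[eps_gt0 eps_le2] O_ge0 M_gt0.
have -> : - (eps ^+ 2 * O) / (4 * M) = - (eps ^+ 2 * O) / 4 / M.
  by rewrite invfM mulrA.
rewrite ler_pM2r ?invr_gt0 //.
have : expR (eps / 2 - 1) - expR (-1) <= eps / 2.
  by apply: expR_sub1_sub_expRN1_le; apply/andP; split; lra.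
have : 0 <= eps / 2 * O by rewrite mulr_ge0 //; lra.
rewrite expr2; nra.
Qed.

Theorem lemma4 (R : realType) (V C : finType) (f : C -> {set V} -> R)
    (B : nat) (x : seq V -> V -> R) (eps : R) (c : C) :
  (forall c' : C, nonneg_set (f c') /\ monotone_set (f c') /\ submodular (f c')) ->
  (0 < B)%N ->
  valid_rule f c B x ->
  0 < eps ->
  0 < Mc (f c) ->
  Pr_out B x (fun S => f c S <= (1 - expR (-1) - eps) * OPT f c B)
    <= expR (- (eps ^+ 2 * OPT f c B) / (4 * Mc (f c))).
Proof.
move=> f_ok B_gt0 rule eps_gt0 M_gt0.
have [F_ge0 [Fmono Fsub]] := f_ok c.
have O_ge0 : 0 <= OPT f c B by apply: OPT_ge0 => c'; case: (f_ok c').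
have margB v S : 0 <= marg (f c) v S <= Mc (f c).
  by rewrite marg_ge0 ?marg_le_Mc.
have chernoff := Pr_out_le_expR (fun h hB => (rule h hB).1)
  (fun h hB => (rule h hB).2 c) margB M_gt0 B_gt0 F_ge0 O_ge0.
have [eps_le2 | eps_gt2] := lerP eps 2.
  apply: le_trans (chernoff _ (eps / 2) _) _; first by apply/andP; split; lra.
  by rewrite ler_expR chernoff_exponent_le ?eps_gt0.
(* for eps > 2 the threshold is negative unless OPT = 0 *)
have [OPT0 | OPT_neq0] := eqVneq (OPT f c B) 0.
  apply: le_trans (chernoff _ 0 _) _; first by rewrite lexx ler01.
  by rewrite OPT0 !(mul0r, mulr0, subr0, oppr0).
rewrite (_ : Pr_out _ _ _ = 0) ?expR_ge0 // /Pr_out big_pred0 // => t.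
apply/negbTE; rewrite -ltNge; apply: lt_le_trans (F_ge0 _).
rewrite pmulr_llt0 ?lt0r ?OPT_neq0 //.
by have := @expR_ge0 R (-1); lra.
Qed.
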